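(* Let $m>3$ be such that a Steiner triple system $\mathrm{STS}(\mathcal M)$ on $\mathcal M$ exists. Then the hypergraph PIN model on $\mathcal H_{\mathrm{STS}}=(\mathcal M,\mathrm{STS}(\mathcal M))$ is strict Type $\mathcal S$.
   Context: Let $\mathcal M=\{1,\dots,m\}$. A Steiner triple system $\mathrm{STS}(\mathcal M)$ is a collection of 3-element subsets of $\mathcal M$ such that every 2-element subset of $\mathcal M$ is contained in exactly one member of the collection. A hypergraph PIN model on $\mathcal H=(\mathcal M,\mathcal E)$ is defined as follows. Let $\mathcal E^{(n)}$ contain $n$ copies of each hyperedge. Independent Bernoulli(1/2) variables $\xi_e$ are attached to the $e\in\mathcal E^{(n)}$, and $X^n_i=(\xi_e:e\in\mathcal E^{(n)},\ i\in e)$; the single-letter source $X_{\mathcal M}$ is the case $n=1$. Entropies are base 2. $\Delta(\mathcal P)=\frac1{|\mathcal P|-1}[\sum_{A\in\mathcal P}H(X_A)-H(X_{\mathcal M})]$ for partitions with at least 2 cells, where $X_A=(X_i:i\in A)$. The source is strict Type $\mathcal S$ if the singleton partition $\{\{1\},\dots,\{m\}\}$ is the unique minimizer of $\Delta$. *)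

From mathcomp Require Import all_boot.
From Stdlib Require Import Reals.
Set Implicit Arguments. Unset Strict Implicit. Unset Printing Implicit Defensive.

Definition is_STS (m : nat) (S : {set {set 'I_m}}) : Prop :=
  (forall B, B \in S -> #|B| = 3) /\
  (forall x y : 'I_m, x != y -> #|[set B in S | (x \in B) && (y \in B)]| = 1).

Definition edge_t (m : nat) (E : {set {set 'I_m}}) := {e : {set 'I_m} | e \in E}.

(* Sample space of the single-letter (n = 1) PIN source: one bit xi_e per
   hyperedge; the xi_e are i.i.d. Bernoulli(1/2), i.e. the uniform
   distribution on this finite type. *)
Definition omega (m : nat) (E : {set {set 'I_m}}) := {ffun edge_t E -> bool}.

(* X_A = (X_i : i in A), X_i = (xi_e : i in e), encoded as the finite function
   (i, e) |-> xi_e if i \in A and i \in e, and false (a fixed filler) otherwise. *)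
Definition X_A (m : nat) (E : {set {set 'I_m}}) (A : {set 'I_m}) (w : omega E)
  : {ffun 'I_m * edge_t E -> bool} :=
  [ffun ie : 'I_m * edge_t E =>
     if (ie.1 \in A) && (ie.1 \in val ie.2) then w ie.2 else false].

Local Open Scope R_scope.

Definition log2 (x : R) : R := ln x / ln 2.

Definition prob_uniform (Om T : finType) (f : Om -> T) (t : T) : R :=
  INR #|[set w : Om | f w == t]| / INR #|Om|.

Definition entropy (Om T : finType) (f : Om -> T) : R :=
  - \big[Rplus/0]_(t : T)
      (if Req_EM_T (prob_uniform f t) 0 then 0
       else prob_uniform f t * log2 (prob_uniform f t)).

Definition H_PIN (m : nat) (E : {set {set 'I_m}}) (A : {set 'I_m}) : R :=
  entropy (X_A (E := E) A).

Definition Delta (m : nat) (E : {set {set 'I_m}}) (P : {set {set 'I_m}}) : R :=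
  (\big[Rplus/0]_(A in P) H_PIN E A - H_PIN E [set: 'I_m])
    / (INR #|P| - 1).

Definition admissible (m : nat) (P : {set {set 'I_m}}) : Prop :=
  partition P [set: 'I_m] /\ (2 <= #|P|)%nat.

Definition singleton_partition (m : nat) : {set {set 'I_m}} :=
  [set [set i] | i : 'I_m].

Definition strict_typeS (m : nat) (E : {set {set 'I_m}}) : Prop :=
  admissible (singleton_partition m) /\
  forall P : {set {set 'I_m}}, admissible P -> P <> singleton_partition m ->
    Delta E (singleton_partition m) < Delta E P.

(* In the PIN model the bits attached to the hyperedges are independent and fair,
   so H(X_A) is the number of hyperedges meeting A.  For the singleton partition
   this gives Delta = (3 |S| - |S|) / (m - 1) = m / 3.  A partition P with k parts
   splits every block of the Steiner system as 3, 2+1 or 1+1+1; weighting these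
   splits and double counting gives 10 |S| <= 4 T + s and 6 |S| <= 2 T + s, where
   T = sum_(A in P) H(X_A) and s counts the ordered pairs of points inside a part,
   so that s <= (m - k) (m - k + 1).  Together with 6 |S| = m (m - 1) this yields
   Delta(P) > m / 3 whenever 2 <= k < m, and k = m only for the singleton
   partition. *)

From Pilot Require Import Defs.
From Stdlib Require Import Reals Lra Lia.
From HB Require Import structures.
From mathcomp Require Import all_boot zify.
Set Implicit Arguments. Unset Strict Implicit. Unset Printing Implicit Defensive.

Local Open Scope R_scope.

HB.instance Definition _ :=
  Monoid.isComLaw.Build R 0 Rplus (fun a b c => esym (Rplus_assoc a b c))
    Rplus_comm Rplus_0_l.

Lemma big_Rplus_INR (I : finType) (P : pred I) (F : I -> nat) :
  \big[Rplus/0]_(i | P i) INR (F i) = INR (\sum_(i | P i) F i).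
Proof. by rewrite (big_morph INR plus_INR (erefl (INR 0))). Qed.

Lemma big_Rplus_const (I : finType) (A : {pred I}) (c : R) :
  \big[Rplus/0]_(i in A) c = INR #|A| * c.
Proof.
rewrite big_const; elim: #|A| => [|n IH]; first by rewrite /=; lra.
by rewrite iterS IH S_INR; lra.
Qed.

Local Close Scope R_scope.

Section UniformFibres.
Variables (Om T : finType) (f : Om -> T) (K : nat).
Hypothesis card_fibre : forall w, #|[set w' | f w' == f w]| = K.

Lemma card_fibre_image t :
  #|[set w | f w == t]| = if t \in f @: setT then K else 0.
Proof.
case: imsetP => [[w _ ->] | t_out]; first exact: card_fibre.
apply/eqP; rewrite cards_eq0; apply/eqP/setP => w; rewrite !inE.
by apply/negbTE/eqP => fw_t; apply: t_out; exists w.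
Qed.

Lemma card_uniform_fibres : #|Om| = #|f @: setT| * K.
Proof.
rewrite -[LHS]sum1_card (partition_big f xpredT) //= -sum_nat_const [RHS]big_mkcond.
apply: eq_bigr => t _; rewrite -card_fibre_image -sum1_card.
by apply: eq_bigl => w; rewrite inE.
Qed.

Local Open Scope R_scope.

Lemma entropy_uniform_fibres :
  (0 < #|Om|)%nat -> entropy f = log2 (INR #|f @: setT|).
Proof.
move=> Om_gt0; set N := #|f @: setT|.
have /andP[N_gt0 K_gt0] : ((0 < N) && (0 < K))%nat.
  by rewrite -muln_gt0 -card_uniform_fibres.
have /lt_0_INR N_pos : (0 < N)%coq_nat by apply/ltP.
have /lt_0_INR K_pos : (0 < K)%coq_nat by apply/ltP.
have probE t : prob_uniform f t = if t \in f @: setT then / INR N else 0.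
  rewrite /prob_uniform card_fibre_image card_uniform_fibres -/N mult_INR.
  by case: ifP => _; [field; lra | rewrite /Rdiv Rmult_0_l].
have inv_neq0 : / INR N <> 0 by apply: Rinv_neq_0_compat; lra.
rewrite /entropy (eq_bigr (fun t =>
    if t \in f @: setT then / INR N * log2 (/ INR N) else 0)); last first.
  move=> t _; rewrite probE.
  by case: (t \in f @: setT); case: Req_EM_T => // ?; exfalso; auto.
rewrite -big_mkcond big_Rplus_const /log2 ln_Rinv //.
have := ln_lt_2; rewrite -/N => ln2_pos; field; lra.
Qed.

End UniformFibres.

Lemma INR_expn (a d : nat) : INR (a ^ d) = pow (INR a) d.
Proof. by elim: d => [|d IH]; [rewrite expn0 | rewrite expnS mult_INR IH]. Qed.

Definition incident_edges (m : nat) (E : {set {set 'I_m}}) (A : {set 'I_m}) :=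
  [set e in E | A :&: e != set0].

Section PINEntropy.
Variables (m : nat) (E : {set {set 'I_m}}) (A : {set 'I_m}).

Let met : {set edge_t E} := [set e | A :&: val e != set0].

Lemma X_A_eq (w w' : omega E) :
  (X_A A w == X_A A w') = [forall e in met, w e == w' e].
Proof.
apply/eqP/forall_inP => [eq_X e | eq_w].
  rewrite inE => /set0Pn[i]; rewrite inE => /andP[iA ie].
  by move/ffunP: eq_X => /(_ (i, e)); rewrite !ffunE /= iA ie /= => ->.
apply/ffunP => -[i e]; rewrite !ffunE /=.
case: ifP => // /andP[iA ie]; apply/eqP/eq_w.
by rewrite inE; apply/set0Pn; exists i; rewrite inE iA.
Qed.

(* Flipping the bits by [w] maps the words vanishing on [met] onto the fibre of [w]. *)
Lemma card_X_A_fibre (w : omega E) :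
  #|[set w' | X_A A w' == X_A A w]| = 2 ^ #|~: met|.
Proof.
pose flip (u : omega E) : omega E := [ffun e => u e (+) w e].
have flip_inj : injective flip.
  move=> u u' /ffunP eq_uu'; apply/ffunP => e.
  by move: (eq_uu' e); rewrite !ffunE; case: (u e) (u' e) (w e) => [] [] [].
have -> : [set w' | X_A A w' == X_A A w] = flip @: pffun_on false (~: met) predT.
  apply/setP => v; rewrite inE X_A_eq; apply/forall_inP/imsetP.
    move=> agree; exists (flip v); last first.
      by apply/ffunP => e; rewrite !ffunE; case: (v e) (w e) => [] [].
    apply/pffun_onP; split=> //; apply/subsetP => e; rewrite !inE ffunE.
    by apply: contra => e_met; rewrite (eqP (agree e _)) ?addbb // inE.
  move=> [u /pffun_onP[/subsetP u_supp _] ->] e e_met; rewrite ffunE.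
  have : e \notin false.-support u by apply: contraL e_met => /u_supp; rewrite in_setC.
  by rewrite inE negbK => /eqP ->.
by rewrite card_imset // card_pffun_on card_bool.
Qed.

Lemma card_met : #|met| = #|incident_edges E A|.
Proof.
rewrite -(card_imset _ val_inj); apply: eq_card => e; apply/imsetP/idP.
  by move=> [x]; rewrite !inE => x_met ->; rewrite (valP x).
by rewrite inE => /andP[eE e_met]; exists (exist _ e eE); rewrite ?inE.
Qed.

Lemma H_PIN_incident : H_PIN E A = INR #|incident_edges E A|.
Proof.
have card_omega : #|omega E| = 2 ^ #|~: met| * 2 ^ #|met|.
  by rewrite card_ffun card_bool -expnD addnC cardsC.
rewrite /H_PIN (entropy_uniform_fibres card_X_A_fibre); last first.
  by rewrite card_omega muln_gt0 !expn_gt0.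
have := card_uniform_fibres card_X_A_fibre.
rewrite card_omega mulnC => /eqP; rewrite eqn_pmul2r ?expn_gt0 // => /eqP <-.
rewrite -card_met INR_expn; change (INR 2) with (IZR 2).
rewrite /log2 ln_pow; last lra.
have ln2_pos := ln_lt_2; field; lra.
Qed.

End PINEntropy.

Local Open Scope R_scope.

Lemma big_H_PIN (m : nat) (E P : {set {set 'I_m}}) :
  \big[Rplus/0]_(A in P) H_PIN E A = INR (\sum_(A in P) #|incident_edges E A|).
Proof. by rewrite -big_Rplus_INR; apply: eq_bigr => A _; exact: H_PIN_incident. Qed.

Local Close Scope R_scope.

Lemma card_set_sum (T : finType) (A : {pred T}) (b : pred T) :
  #|[set x in A | b x]| = \sum_(x in A) b x.
Proof.
rewrite -sum1_card big_mkcond [RHS]big_mkcond; apply: eq_bigr => x _.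
by rewrite inE; case: (x \in A); case: (b x).
Qed.

Definition distinct_pairs (T : finType) (X : {set T}) : {set T * T} :=
  [set p | [&& p.1 \in X, p.2 \in X & p.1 != p.2]].

Lemma card_distinct_pairs (T : finType) (X : {set T}) :
  #|distinct_pairs X| = #|X| * #|X|.-1.
Proof.
have := cardsID [set p : T * T | p.1 == p.2] (setX X X); rewrite cardsX.
have -> : setX X X :&: [set p | p.1 == p.2] = (fun x => (x, x)) @: X.
  apply/setP => -[x y]; rewrite !inE /=; apply/idP/imsetP.
    by move=> /andP[/andP[xX _] /eqP <-]; exists x.
  by move=> [z zX [-> ->]]; rewrite zX eqxx.
have -> : setX X X :\: [set p | p.1 == p.2] = distinct_pairs X.
  by apply/setP => -[x y]; rewrite !inE /= andbC andbA.
rewrite card_imset; last by move=> x y [].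
by move=> sum_eq; rewrite -subn1 mulnBr muln1 -sum_eq addKn.
Qed.

(* [t] splits a 3-element set as 3, 2+1 or 1+1+1 among the parts. *)
Lemma three_split_ge10 (I : finType) (Q : pred I) (t : I -> nat) :
  \sum_(i | Q i) t i = 3 ->
  10 <= \sum_(i | Q i) (4 * (0 < t i) + t i * (t i).-1).
Proof.
move=> sum_t.
have odd_part : 0 < \sum_(i | Q i) odd (t i).
  have : (\sum_(i | Q i) t i) %% 2 = (\sum_(i | Q i) odd (t i)) %% 2.
    by rewrite -modn_summ; congr (_ %% 2); apply: eq_bigr => i _; rewrite modn2.
  by rewrite sum_t; case: (\sum_(i | Q i) odd (t i)).
have : \sum_(i | Q i) (3 * t i + odd (t i)) <=
       \sum_(i | Q i) (4 * (0 < t i) + t i * (t i).-1).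
  apply: leq_sum => i _; case: (t i) => [|[|[|c]]] //=.
  by case: (odd c) => /=; nia.
by rewrite big_split /= -big_distrr /= sum_t; lia.
Qed.

Lemma three_split_ge6 (I : finType) (Q : pred I) (t : I -> nat) :
  \sum_(i | Q i) t i = 3 ->
  6 <= \sum_(i | Q i) (2 * (0 < t i) + t i * (t i).-1).
Proof.
move=> sum_t.
have : \sum_(i | Q i) (2 * t i) <= \sum_(i | Q i) (2 * (0 < t i) + t i * (t i).-1).
  by apply: leq_sum => i _; case: (t i) => [|c] //=; nia.
by rewrite -big_distrr /= sum_t; lia.
Qed.

Section SteinerTripleSystem.
Variables (m : nat) (S : {set {set 'I_m}}).
Hypothesis S_STS : is_STS S.

Lemma STS_sum_distinct_pairs (X : {set 'I_m}) :
  \sum_(e in S) #|X :&: e| * #|X :&: e|.-1 = #|X| * #|X|.-1.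
Proof.
transitivity (\sum_(e in S) \sum_(p in distinct_pairs X) ((p.1 \in e) && (p.2 \in e) : nat)).
  apply: eq_bigr => e _; rewrite -card_distinct_pairs -card_set_sum.
  apply: eq_card => -[x y]; rewrite !inE /=.
  by case: (x \in X) (y \in X) (x \in e) (y \in e) (x != y) => [] [] [] [] [].
rewrite exchange_big /= -card_distinct_pairs -sum1_card; apply: eq_bigr => p.
by rewrite inE => /and3P[_ _ /(proj2 S_STS)]; rewrite -card_set_sum.
Qed.

Lemma STS_card : 6 * #|S| = m * m.-1.
Proof.
rewrite -[in RHS](card_ord m) -cardsT -STS_sum_distinct_pairs -sum1_card big_distrr /=.
by apply: eq_bigr => e eS; rewrite setTI (proj1 S_STS e eS).
Qed.

Lemma card_incident_edges_setT : #|incident_edges S setT| = #|S|.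
Proof.
apply: eq_card => e; rewrite !inE setTI -card_gt0.
by case eS: (e \in S); rewrite //= (proj1 S_STS e eS).
Qed.

End SteinerTripleSystem.

Section Partition.
Variables (m : nat) (P : {set {set 'I_m}}).
Hypothesis P_part : partition P [set: 'I_m].

Lemma partition_sum_cardI (X : {set 'I_m}) : \sum_(A in P) #|A :&: X| = #|X|.
Proof.
case/and3P: P_part => /eqP P_cover P_triv _.
transitivity (\sum_(A in P) \sum_(i in X) (i \in A : nat)).
  by apply: eq_bigr => A _; rewrite -card_set_sum; apply: eq_card => i; rewrite !inE andbC.
rewrite exchange_big /= -sum1_card; apply: eq_bigr => i _.
have i_cover : i \in cover P by rewrite P_cover inE.
rewrite -card_set_sum (_ : [set A in P | i \in A] = [set pblock P i]) ?cards1 //.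
apply/setP => A; rewrite !inE; apply/andP/eqP => [[AP iA] | ->].
  by rewrite (def_pblock P_triv AP iA).
by rewrite pblock_mem // mem_pblock.
Qed.

Lemma partition_card_gt0 A : A \in P -> 0 < #|A|.
Proof.
by case/and3P: P_part => _ _ P_set0 AP; rewrite card_gt0; apply: contraNneq P_set0 => <-.
Qed.

Lemma sum_partition_predn : \sum_(A in P) #|A|.-1 + #|P| = m.
Proof.
rewrite -sum1_card -big_split /= -[RHS](card_ord m) -cardsT (card_partition P_part).
by apply: eq_bigr => A AP; rewrite addn1 prednK // partition_card_gt0.
Qed.

Lemma partition_card_le : #|P| <= m.
Proof. by rewrite -[X in _ <= X]sum_partition_predn leq_addl. Qed.

(* Every part has at most [m - #|P| + 1] elements, since the [#|A|.-1] sum to [m - #|P|]. *)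
Lemma partition_sum_pairs_le :
  \sum_(A in P) #|A| * #|A|.-1 <= (m - #|P|) * (m - #|P|).+1.
Proof.
have sum_predn : \sum_(A in P) #|A|.-1 = m - #|P|.
  by rewrite -[X in _ = X - _]sum_partition_predn addnK.
rewrite -sum_predn big_distrl /=; apply: leq_sum => A AP.
rewrite mulnC leq_mul2l -[#|A|](prednK (partition_card_gt0 AP)) ltnS.
by rewrite (bigD1 A) //= leq_addr orbT.
Qed.

Lemma partition_eq_singleton : #|P| = m -> P = singleton_partition m.
Proof.
move=> card_P.
have /eqP : \sum_(A in P) #|A|.-1 = 0 by have := sum_partition_predn; rewrite card_P; lia.
rewrite sum_nat_eq0 => /forall_inP singl.
apply/eqP; rewrite eqEcard card_imset ?card_ord ?card_P //; last exact: set1_inj.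
rewrite leqnn andbT; apply/subsetP => A AP.
have /cards1P[x ->] : #|A| == 1.
  by have := singl A AP; have := partition_card_gt0 AP; case: #|A| => [|[]].
exact: imset_f.
Qed.

End Partition.

Lemma partition_singleton (m : nat) : partition (singleton_partition m) [set: 'I_m].
Proof.
apply/and3P; split.
- apply/eqP/setP => i; rewrite inE; apply/bigcupP; exists [set i]; last exact: set11.
  exact: imset_f.
- apply/trivIsetP => _ _ /imsetP[i _ ->] /imsetP[j _ ->] neq_ij.
  by rewrite disjoints1 inE; apply: contra neq_ij => /eqP ->.
- by apply/imsetP => -[i _] /setP /(_ i); rewrite !inE eqxx.
Qed.

Lemma card_singleton_partition (m : nat) : #|singleton_partition m| = m.
Proof. by rewrite card_imset ?card_ord //; exact: set1_inj. Qed.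

Lemma sum_incident_edges (m : nat) (S P : {set {set 'I_m}}) :
  \sum_(A in P) #|incident_edges S A| = \sum_(e in S) \sum_(A in P) (0 < #|A :&: e|).
Proof.
rewrite exchange_big /=; apply: eq_bigr => A _.
by rewrite card_set_sum; apply: eq_bigr => e _; rewrite card_gt0.
Qed.

Section PartitionedSTS.
Variables (m : nat) (S P : {set {set 'I_m}}).
Hypothesis S_STS : is_STS S.
Hypothesis P_part : partition P [set: 'I_m].

(* Double counting over the blocks of [S], each of which [P] splits into parts
   of total size 3. *)
Lemma STS_partition_count (a b : nat) :
  (forall t : {set 'I_m} -> nat, \sum_(A in P) t A = 3 ->
     b <= \sum_(A in P) (a * (0 < t A) + t A * (t A).-1)) ->
  b * #|S| <= a * \sum_(A in P) #|incident_edges S A| + \sum_(A in P) #|A| * #|A|.-1.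
Proof.
move=> split_ge.
have pairsE : \sum_(A in P) #|A| * #|A|.-1 =
              \sum_(e in S) \sum_(A in P) #|A :&: e| * #|A :&: e|.-1.
  by rewrite exchange_big /=; apply: eq_bigr => A _; rewrite STS_sum_distinct_pairs.
rewrite pairsE sum_incident_edges big_distrr -big_split -sum1_card big_distrr /=.
apply: leq_sum => e eS; rewrite muln1 big_distrr -big_split /=; apply: split_ge.
by rewrite partition_sum_cardI // (proj1 S_STS e eS).
Qed.

End PartitionedSTS.

Lemma sum_incident_singleton (m : nat) (S : {set {set 'I_m}}) : is_STS S ->
  \sum_(A in singleton_partition m) #|incident_edges S A| = 3 * #|S|.
Proof.
move=> S_STS; rewrite sum_incident_edges -sum1_card big_distrr /=.
apply: eq_bigr => e eS; rewrite muln1 -(proj1 S_STS e eS).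
rewrite -(partition_sum_cardI (partition_singleton m)); apply: eq_bigr => _ /imsetP[i _ ->].
have : #|[set i] :&: e| <= 1 by rewrite -(cards1 i) subset_leq_card // subsetIl.
by case: #|_| => [|[]].
Qed.

(* The first counting inequality suffices when [k < 2 (m - k)], the second otherwise. *)
Lemma counting_gap (m k n T s : nat) :
  6 * n + m = m * m -> 10 * n <= 4 * T + s -> 6 * n <= 2 * T + s ->
  s <= (m - k) * (m - k).+1 -> 2 <= k -> k < m -> 3 < m ->
  3 * n + m * k < 3 * T + m.
Proof.
move=> n_eq count10 count6 pairs_le k_ge2 k_lt_m m_gt3.
have [j m_eq] : exists j, m = k + j by exists (m - k); lia.
subst m; rewrite addKn in pairs_le.
case: (ltnP k (2 * j)) => [k_lt | k_ge].
- have : 0 < (k - 1) * (2 * j - k) by rewrite muln_gt0; lia.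
  nia.
- have : 0 < j * (2 * k - j - 3) by rewrite muln_gt0; lia.
  nia.
Qed.

Local Open Scope R_scope.

Lemma Delta_lt_of_counting_gap (m k n T : nat) :
  (6 * n + m = m * m)%N -> (1 < k)%N -> (3 < m)%N -> (3 * n + m * k < 3 * T + m)%N ->
  (INR (3 * n) - INR n) / (INR m - 1) < (INR T - INR n) / (INR k - 1).
Proof.
move=> /(f_equal INR) n_eq /ltP/lt_INR k_gt1 /ltP/lt_INR m_gt3 /ltP/lt_INR gap.
move: n_eq gap; rewrite -!plusE -!multE !plus_INR !mult_INR /= => n_eq gap.
rewrite /= in k_gt1 m_gt3.
rewrite [X in X < _](_ : _ = INR m / 3); last by field_simplify_eq; [nra | lra].
apply: (Rmult_lt_reg_r (3 * (INR k - 1))); first lra.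
rewrite (_ : INR m / 3 * (3 * (INR k - 1)) = INR m * (INR k - 1)); last by field.
rewrite (_ : (INR T - INR n) / (INR k - 1) * (3 * (INR k - 1)) = 3 * (INR T - INR n));
  last by field; lra.
nra.
Qed.

Local Close Scope R_scope.

Theorem corollary5 (m : nat) (S : {set {set 'I_m}}) :
  (3 < m)%nat -> is_STS S -> strict_typeS S.
Proof.
move=> m_gt3 S_STS; split.
  by split; [exact: partition_singleton | rewrite card_singleton_partition; lia].
move=> P [P_part k_ge2] P_neq.
have k_lt_m : #|P| < m.
  rewrite ltn_neqAle (partition_card_le P_part) andbT.
  by apply: contra_not_neq P_neq => /(partition_eq_singleton P_part).
have S_card : 6 * #|S| + m = m * m.
  by rewrite STS_card // addnC -mulnS prednK // (leq_trans _ m_gt3).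
rewrite /Defs.Delta !big_H_PIN H_PIN_incident card_incident_edges_setT //.
rewrite sum_incident_singleton // card_singleton_partition.
apply: Delta_lt_of_counting_gap => //.
apply: counting_gap S_card _ _ (partition_sum_pairs_le P_part) _ _ _ => //.
- by apply: STS_partition_count => // t; exact: three_split_ge10.
- by apply: STS_partition_count => // t; exact: three_split_ge6.
Qed.
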